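(* Let $f(X,I)=f_0(I)+f_1(I)X+f_2(I)X^2$ with $f_0,f_1,f_2$ smooth on $[0,\infty)$, and consider the planar system $\dot X=f(X,I)$, $\dot I=(X-1)I$. Let $\beta=(\beta_1,\beta_2)$ be $f$-compatible and let $\mathcal{T}(\beta)$ be the closed triangle in the $(X,I)$-plane with vertices $(\beta_2,0)$, $(\beta_1,0)$, $(0,1)$. Then there exist no periodic solutions, homoclinic loops or oriented phase polygons of this system contained in the interior $\mathcal{T}(\beta)\setminus\partial\mathcal{T}(\beta)$.
   Context: Put $\lambda:=f_0(1)$, $P_f(I):=(f_0(I)-\lambda I)/(1-I)$ (smoothly extended to $I=1$), $h_f(z,I):=P_f(I)+zf_1(I)+z^2(I+(1-I)f_2(I))$. A pair $\beta=(\beta_1,\beta_2)$ with $\beta_1>\beta_2$ is called $f$-compatible if $\beta_2\le\lambda\le\beta_1$ and $h_f(\beta_i,I)/(\beta_j-\beta_i)\ge0$ for all $I\in[0,1]$ and $\{i,j\}=\{1,2\}$. *)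

From Stdlib Require Import Reals Lra Lia.
From Coquelicot Require Import Coquelicot.
Open Scope R_scope.

(* g is smooth on [0, +oo): it agrees on [0, +oo) with some C^oo function on R
   (Whitney/Seeley sense of smoothness on a closed half-line). *)
Definition smooth_on_nonneg (g : R -> R) : Prop :=
  exists G : R -> R,
    (forall (n : nat) (x : R), ex_derive_n G n x) /\
    (forall x, 0 <= x -> G x = g x).

Definition fXI (f0 f1 f2 : R -> R) (X I : R) : R :=
  f0 I + f1 I * X + f2 I * X ^ 2.

Definition lam (f0 : R -> R) : R := f0 1.

(* P_f(I) := (f0(I) - lambda I)/(1 - I), extended at I = 1 by its (unique
   continuous, in fact smooth) extension, namely lambda - f0'(1). *)
Definition Pf (f0 : R -> R) (I : R) : R :=
  if Req_EM_T I 1 then lam f0 - Derive f0 1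
  else (f0 I - lam f0 * I) / (1 - I).

Definition hf (f0 f1 f2 : R -> R) (z I : R) : R :=
  Pf f0 I + z * f1 I + z ^ 2 * (I + (1 - I) * f2 I).

Definition f_compatible (f0 f1 f2 : R -> R) (b1 b2 : R) : Prop :=
  b1 > b2 /\ b2 <= lam f0 <= b1 /\
  (forall I, 0 <= I <= 1 ->
     hf f0 f1 f2 b1 I / (b2 - b1) >= 0 /\ hf f0 f1 f2 b2 I / (b1 - b2) >= 0).

Definition in_int_T (b1 b2 : R) (P : R * R) : Prop :=
  exists a b c : R, 0 < a /\ 0 < b /\ 0 < c /\ a + b + c = 1 /\
    fst P = a * b2 + b * b1 + c * 0 /\ snd P = a * 0 + b * 0 + c * 1.

Definition is_solution (f0 f1 f2 : R -> R) (x i : R -> R) : Prop :=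
  forall t, is_derive x t (fXI f0 f1 f2 (x t) (i t)) /\
            is_derive i t ((x t - 1) * i t).

Definition is_equilibrium (f0 f1 f2 : R -> R) (P : R * R) : Prop :=
  fXI f0 f1 f2 (fst P) (snd P) = 0 /\ (fst P - 1) * snd P = 0.

Definition periodic_solution_in (f0 f1 f2 : R -> R) (Sset : R * R -> Prop) : Prop :=
  exists (x i : R -> R) (T : R),
    is_solution f0 f1 f2 x i /\ 0 < T /\
    (forall t, x (t + T) = x t /\ i (t + T) = i t) /\
    (exists t, (x t, i t) <> (x 0, i 0)) /\
    (forall t, Sset (x t, i t)).

Definition connects (x i : R -> R) (P Q : R * R) : Prop :=
  is_lim x m_infty (fst P) /\ is_lim i m_infty (snd P) /\
  is_lim x p_infty (fst Q) /\ is_lim i p_infty (snd Q).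

Definition homoclinic_loop_in (f0 f1 f2 : R -> R) (Sset : R * R -> Prop) : Prop :=
  exists (P : R * R) (x i : R -> R),
    is_equilibrium f0 f1 f2 P /\ is_solution f0 f1 f2 x i /\
    connects x i P P /\ (exists t, (x t, i t) <> P) /\
    Sset P /\ (forall t, Sset (x t, i t)).

Definition oriented_phase_polygon_in (f0 f1 f2 : R -> R) (Sset : R * R -> Prop) : Prop :=
  exists (n : nat) (p : nat -> R * R) (xs is_ : nat -> R -> R),
    (1 <= n)%nat /\ p n = p 0%nat /\
    (forall j k, (j < n)%nat -> (k < n)%nat -> p j = p k -> j = k) /\
    (forall k, (k < n)%nat ->
       is_equilibrium f0 f1 f2 (p k) /\ Sset (p k) /\
       is_solution f0 f1 f2 (xs k) (is_ k) /\
       connects (xs k) (is_ k) (p k) (p (S k)) /\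
       (exists t, (xs k t, is_ k t) <> p k) /\
       (forall t, Sset (xs k t, is_ k t))).

From Stdlib Require Import Reals Lra Lia.
From Coquelicot Require Import Coquelicot.
Open Scope R_scope.

(* With a = b1 (1 - I) and b = b2 (1 - I), the interior of T(beta) is 0 < I < 1, b < X < a,
   and every interior equilibrium lies on X = 1.  On the levels I at which X = 1 crosses the
   interior, put B(X, I) = 1 / (I (X - a) (X - b)) and
     V_c(X, I) = A(I) ln((a - X) / (a - 1)) + (1 - A(I)) ln((X - b) / (1 - b))
                 - int_c^I B(1, s) f(1, s) ds,      A(I) = (b1 - 1 / (1 - I)) / (b1 - b2).
   Along solutions dV/dt = (X - 1) I D(X, I) with D(1, I) = 0, and f-compatibility makes
   D strictly increasing in X, so V increases strictly off X = 1.  A periodic orbit, or an orbit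
   joining interior equilibria, takes its extreme levels of I on X = 1 or at its limit points,
   so all its levels are crossing levels and V is defined along it; periodicity, resp. returning to the starting vertex, forces V to be
   constant, hence the orbit to be stationary. *)

Lemma continuous_of_smooth_on_nonneg (g : R -> R) x :
  smooth_on_nonneg g -> 0 < x -> continuous g x.
Proof.
  intros [G [HG HGg]] Hx.
  apply (continuous_ext_loc g G).
  - apply (filter_imp (fun y => 0 < y)); [intros y Hy; apply HGg; lra | exact (open_gt 0 x Hx)].
  - apply (ex_derive_continuous G), (HG 1%nat).
Qed.

Lemma nondecreasing_of_derive_nonneg (g dg : R -> R) :
  (forall t, is_derive g t (dg t)) -> (forall t, 0 <= dg t) ->
  forall s t, s <= t -> g s <= g t.
Proof.
  intros Hd Hpos s t Hst.
  destruct (MVT_gen g s t dg) as [c [_ Hc]].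
  - intros y _; apply Hd.
  - intros y _; apply continuity_pt_filterlim, (ex_derive_continuous g); eexists; apply Hd.
  - assert (0 <= dg c * (t - s)) by (apply Rmult_le_pos; [apply Hpos | lra]); lra.
Qed.

Lemma constant_of_derive_zero (g : R -> R) :
  (forall t, is_derive g t 0) -> forall t, g t = g 0.
Proof.
  intros Hd t.
  assert (Hup := nondecreasing_of_derive_nonneg g (fun _ => 0) Hd (fun _ => Rle_refl 0)).
  assert (Hdown : forall s t, s <= t -> - g s <= - g t).
  { apply (nondecreasing_of_derive_nonneg _ (fun _ => - 0)); [| intros; lra].
    intros s; apply (is_derive_opp g s 0), Hd. }
  destruct (Rle_dec 0 t); [specialize (Hup 0 t); specialize (Hdown 0 t)
                          | specialize (Hup t 0); specialize (Hdown t 0)]; lra.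
Qed.

Lemma derive_zero_of_constant (g : R -> R) t l :
  (forall s, g s = g 0) -> is_derive g t l -> l = 0.
Proof.
  intros Hc Hd.
  apply (is_derive_ext g (fun _ => g 0)) in Hd; [| exact Hc].
  rewrite <- (is_derive_unique _ _ _ Hd).
  apply is_derive_unique, (is_derive_const (g 0)).
Qed.

Lemma derive_zero_at_extremum (g : R -> R) tm l :
  ((forall t, g t <= g tm) \/ (forall t, g tm <= g t)) -> is_derive g tm l -> l = 0.
Proof.
  intros Hext Hd.
  destruct Hext as [Hmax | Hmin].
  - apply is_derive_Reals in Hd.
    apply (deriv_maximum g (tm - 1) (tm + 1) tm (exist _ l Hd)); try lra.
    intros; apply Hmax.
  - apply (is_derive_opp g tm l), is_derive_Reals in Hd.
    enough (- l = 0) by lra.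
    apply (deriv_maximum _ (tm - 1) (tm + 1) tm (exist _ (- l) Hd)); try lra.
    intros; apply Ropp_le_contravar, Hmin.
Qed.


Lemma exists_nat_mult_gt t T : 0 < T -> exists n : nat, Rabs t < INR n * T.
Proof.
  intros HT; destruct (INR_unbounded (Rabs t / T)) as [n Hn]; exists n.
  apply (Rmult_lt_compat_r T) in Hn; [| exact HT].
  unfold Rdiv in Hn; rewrite Rmult_assoc, Rinv_l, Rmult_1_r in Hn; lra.
Qed.

Lemma periodic_shift_nat (g : R -> R) T :
  (forall t, g (t + T) = g t) -> forall (n : nat) t, g (t + INR n * T) = g t.
Proof.
  intros Hper n; induction n as [| n IH]; intros t.
  - simpl; f_equal; ring.
  - rewrite S_INR, <- (IH t), <- (Hper (t + INR n * T)); f_equal; ring.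
Qed.

Lemma periodic_attains_max (g : R -> R) T :
  0 < T -> (forall t, g (t + T) = g t) -> (forall t, continuity_pt g t) ->
  exists tM, forall t, g t <= g tM.
Proof.
  intros HT Hper Hcont.
  destruct (continuity_ab_maj g 0 T) as [tM [HM _]]; [lra | intros; apply Hcont |].
  exists tM.
  assert (Hnonneg : forall (n : nat) t, 0 <= t <= INR n * T -> g t <= g tM).
  { induction n as [| n IH]; intros t Ht.
    - simpl in Ht; apply HM; lra.
    - rewrite S_INR in Ht.
      destruct (Rle_dec t T); [apply HM; lra |].
      replace (g t) with (g (t - T)) by (rewrite <- (Hper (t - T)); f_equal; ring).
      apply IH; lra. }
  intros t.
  destruct (exists_nat_mult_gt t T HT) as [n Habs].
  rewrite <- (periodic_shift_nat g T Hper n t).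
  apply (Hnonneg (n + n)%nat); rewrite plus_INR.
  destruct (Rabs_def2 _ _ Habs); lra.
Qed.

Lemma eventually_below_at_ends (g : R -> R) (lm lp a : R) :
  is_lim g m_infty lm -> is_lim g p_infty lp -> lm < a -> lp < a ->
  exists M, forall t, M < Rabs t -> g t < a.
Proof.
  intros Hm Hp Hlm Hlp.
  destruct (Hm _ (open_lt a lm Hlm)) as [M1 HM1].
  destruct (Hp _ (open_lt a lp Hlp)) as [M2 HM2].
  exists (Rmax (- M1) M2); intros t Ht.
  destruct (Rle_dec 0 t).
  - rewrite Rabs_right in Ht by lra; apply HM2; generalize (Rmax_r (- M1) M2); lra.
  - rewrite Rabs_left in Ht by lra; apply HM1; generalize (Rmax_l (- M1) M2); lra.
Qed.

Lemma below_limit_or_max (g : R -> R) (lm lp : R) (P : R -> Prop) :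
  (forall t, continuity_pt g t) -> is_lim g m_infty lm -> is_lim g p_infty lp ->
  P lm -> P lp -> (forall tM, (forall t, g t <= g tM) -> P (g tM)) ->
  forall t0, exists w, P w /\ g t0 <= w.
Proof.
  intros Hcont Hm Hp Plm Plp Pmax t0.
  destruct (Rle_dec (g t0) lm); [exists lm; auto |].
  destruct (Rle_dec (g t0) lp); [exists lp; auto |].
  destruct (eventually_below_at_ends g lm lp (g t0)) as [M HM]; auto; try lra.
  set (K := Rmax M (Rabs t0)).
  destruct (continuity_ab_maj g (- K) K) as [tM [HtM _]].
  - generalize (Rmax_r M (Rabs t0)) (Rabs_pos t0); unfold K; lra.
  - intros; apply Hcont.
  - assert (Hglob : forall t, g t <= g tM).
    { intros t. destruct (Rle_dec (Rabs t) K) as [Ht | Ht].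
      - apply HtM; apply Rabs_le_between; exact Ht.
      - assert (g t0 <= g tM) by (apply HtM, Rabs_le_between, Rmax_r).
        assert (g t < g t0) by (apply HM; generalize (Rmax_l M (Rabs t0)); unfold K in Ht; lra).
        lra. }
    exists (g tM); split; [apply Pmax |]; auto.
Qed.

Lemma nondecreasing_between_limits (g : R -> R) (a b : R) :
  (forall s t, s <= t -> g s <= g t) -> is_lim g m_infty a -> is_lim g p_infty b ->
  forall t, a <= g t <= b.
Proof.
  intros Hmono Ha Hb t; split.
  - apply (is_lim_le_loc g (fun _ => g t) m_infty a (g t)); [| exact Ha | apply is_lim_const].
    exists t; intros s Hs; apply Hmono; lra.
  - apply (is_lim_le_loc (fun _ => g t) g p_infty (g t) b); [| apply is_lim_const | exact Hb].
    exists t; intros s Hs; apply Hmono; lra.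
Qed.

Lemma nondecreasing_periodic_constant (g : R -> R) T :
  0 < T -> (forall t, g (t + T) = g t) -> (forall s t, s <= t -> g s <= g t) ->
  forall t, g t = g 0.
Proof.
  intros HT Hper Hmono t.
  destruct (exists_nat_mult_gt t T HT) as [n Habs].
  assert (Hshift := periodic_shift_nat g T Hper n).
  destruct (Rabs_def2 _ _ Habs).
  assert (0 <= INR n * T) by (apply Rmult_le_pos; [apply pos_INR | lra]).
  destruct (Rle_dec 0 t).
  - assert (g 0 <= g t) by (apply Hmono; lra).
    assert (g t <= g (0 + INR n * T)) by (apply Hmono; lra).
    rewrite Hshift in *; lra.
  - assert (g t <= g 0) by (apply Hmono; lra).
    assert (g 0 <= g (t + INR n * T)) by (apply Hmono; lra).
    rewrite Hshift in *; lra.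
Qed.

Lemma cyclic_chain_eq (v : nat -> R) (n : nat) :
  (1 <= n)%nat -> (forall k, (k < n)%nat -> v k <= v (S k)) -> v n = v 0%nat -> v 0%nat = v 1%nat.
Proof.
  intros Hn Hstep Hcyc.
  assert (Hchain : forall k, (1 <= k <= n)%nat -> v 1%nat <= v k).
  { induction k as [| k IH]; intros Hk; [lia |].
    destruct (Nat.eq_dec k 0) as [-> | Hk0]; [lra |].
    specialize (Hstep k ltac:(lia)); specialize (IH ltac:(lia)); lra. }
  specialize (Hchain n ltac:(lia)); specialize (Hstep 0%nat ltac:(lia)); lra.
Qed.

Section Lyapunov.

Variables b1 b2 : R.
Hypothesis b2_lt_b1 : b2 < b1.

Definition in_slice (X I : R) : Prop := b2 * (1 - I) < X < b1 * (1 - I).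

Definition crossing_level (I : R) : Prop := 0 < I < 1 /\ in_slice 1 I.

Lemma in_int_T_slice P : in_int_T b1 b2 P -> 0 < snd P < 1 /\ in_slice (fst P) (snd P).
Proof.
  intros [a [b [c [Ha [Hb [Hc [Hsum [-> ->]]]]]]]]; simpl.
  replace (1 - (a * 0 + b * 0 + c * 1)) with (a + b) by lra.
  unfold in_slice; split; [lra | split; nra].
Qed.

Lemma crossing_level_convex u w z : crossing_level u -> crossing_level w -> u <= z <= w -> crossing_level z.
Proof. unfold crossing_level, in_slice; intros Hu Hw Hz; split; [lra | split; nra]. Qed.

Lemma crossing_level_open : open crossing_level.
Proof.
  assert (Haffine : forall p q : R, open (fun I => 0 < p + q * I)).
  { intros p q.
    apply (open_comp (fun I => p + q * I) (fun u => 0 < u)); [| apply open_gt].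
    intros I _; apply (ex_derive_continuous (fun I => p + q * I)); auto_derive; auto. }
  apply (open_ext (fun I => (0 < 0 + 1 * I /\ 0 < 1 + -1 * I) /\
                            (0 < (1 - b2) + b2 * I /\ 0 < (b1 - 1) + - b1 * I))).
  - unfold crossing_level, in_slice; intros I; lra.
  - repeat apply open_and; apply Haffine.
Qed.

(* [weight] makes [d log_part / dX = (X - 1) / ((X - b1 (1 - I)) (X - b2 (1 - I)))],
   and the normalising constants make [log_part] vanish on the line [X = 1]. *)
Definition weight (I : R) : R := (b1 - / (1 - I)) / (b1 - b2).

Definition log_part (X I : R) : R :=
  weight I * (ln (b1 * (1 - I) - X) - ln (b1 * (1 - I) - 1))
  + (1 - weight I) * (ln (X - b2 * (1 - I)) - ln (1 - b2 * (1 - I))).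

Definition log_part_dI (X I : R) : R :=
  - / (1 - I) ^ 2 / (b1 - b2) *
    (ln (b1 * (1 - I) - X) - ln (b1 * (1 - I) - 1) - (ln (X - b2 * (1 - I)) - ln (1 - b2 * (1 - I))))
  - weight I * (b1 / (b1 * (1 - I) - X) - b1 / (b1 * (1 - I) - 1))
  + (1 - weight I) * (b2 / (X - b2 * (1 - I)) - b2 / (1 - b2 * (1 - I))).

Definition lyap_B (X I : R) : R := / (I * (X - b1 * (1 - I)) * (X - b2 * (1 - I))).

Lemma log_part_derive_along (x i : R -> R) t dx di :
  is_derive x t dx -> is_derive i t di -> crossing_level (i t) -> in_slice (x t) (i t) ->
  is_derive (fun t => log_part (x t) (i t)) t
    ((x t - 1) * i t * lyap_B (x t) (i t) * dx + log_part_dI (x t) (i t) * di).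
Proof.
  intros Hx Hi [HI H1] HX; unfold in_slice in H1, HX.
  unfold log_part, log_part_dI, lyap_B, weight.
  auto_derive.
  - repeat split; try lra; eexists; eassumption.
  - replace (Derive (fun s => x s) t) with dx by (symmetry; apply is_derive_unique, Hx).
    replace (Derive (fun s => i s) t) with di by (symmetry; apply is_derive_unique, Hi).
    unfold Rminus; field; repeat split; lra.
Qed.

Section Flow.

Variables f0 f1 f2 : R -> R.
Hypothesis lam_between : b2 <= lam f0 <= b1.
Hypothesis hf_sign : forall I, 0 <= I <= 1 ->
  hf f0 f1 f2 b1 I / (b2 - b1) >= 0 /\ hf f0 f1 f2 b2 I / (b1 - b2) >= 0.
Hypothesis f0_cont : forall I, 0 < I -> continuous f0 I.
Hypothesis f1_cont : forall I, 0 < I -> continuous f1 I.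
Hypothesis f2_cont : forall I, 0 < I -> continuous f2 I.

Definition lyap_drift (I : R) : R := lyap_B 1 I * fXI f0 f1 f2 1 I.

Definition lyap (c X I : R) : R := log_part X I - RInt lyap_drift c I.

Definition lyap_D (X I : R) : R := lyap_B X I * fXI f0 f1 f2 X I + log_part_dI X I - lyap_drift I.

(* Written so that, under f-compatibility, each of the three terms is nonnegative. *)
Definition lyap_D_dX (X I : R) : R :=
  hf f0 f1 f2 b2 I / (I * (b1 - b2) * (X - b2 * (1 - I)) ^ 2)
  - hf f0 f1 f2 b1 I / (I * (b1 - b2) * (X - b1 * (1 - I)) ^ 2)
  + ((X - b2 * (1 - I)) * (b1 - lam f0) + (b1 * (1 - I) - X) * (lam f0 - b2))
    / ((X - b1 * (1 - I)) ^ 2 * (X - b2 * (1 - I)) ^ 2).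

Lemma lyap_D_at1 I : lyap_D 1 I = 0.
Proof. unfold lyap_D, log_part_dI, lyap_drift; ring. Qed.

Lemma hf_lt1 z I : I < 1 ->
  hf f0 f1 f2 z I = (f0 I - lam f0 * I) / (1 - I) + z * f1 I + z ^ 2 * (I + (1 - I) * f2 I).
Proof. intros HI; unfold hf, Pf; destruct (Req_EM_T I 1); [lra | reflexivity]. Qed.

Lemma lyap_D_derive X I : crossing_level I -> in_slice X I ->
  is_derive (fun X => lyap_D X I) X (lyap_D_dX X I).
Proof.
  intros [HI H1] HX; unfold in_slice in H1, HX.
  unfold lyap_D, lyap_D_dX, log_part_dI, lyap_B, lyap_drift, weight, fXI.
  rewrite !hf_lt1 by lra.
  auto_derive.
  - repeat split; try lra; repeat apply Rmult_integral_contrapositive_currified; lra.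
  - unfold Rminus; field; repeat split; lra.
Qed.

Lemma lyap_D_dX_pos X I : 0 < I < 1 -> in_slice X I -> 0 < lyap_D_dX X I.
Proof.
  intros HI HX; unfold in_slice in HX.
  destruct (hf_sign I) as [Hh1 Hh2]; [lra |].
  set (a := b1 * (1 - I)) in *; set (b := b2 * (1 - I)) in *.
  assert (Ha : 0 < (X - a) ^ 2) by (apply pow2_gt_0; lra).
  assert (Hb' : 0 < (X - b) ^ 2) by (apply pow2_gt_0; lra).
  assert (T2 : 0 <= hf f0 f1 f2 b2 I / (I * (b1 - b2) * (X - b) ^ 2)).
  { replace (hf f0 f1 f2 b2 I / (I * (b1 - b2) * (X - b) ^ 2))
      with (hf f0 f1 f2 b2 I / (b1 - b2) / (I * (X - b) ^ 2)) by (field; lra).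
    apply Rdiv_le_0_compat; [lra | nra]. }
  assert (T1 : 0 <= - (hf f0 f1 f2 b1 I / (I * (b1 - b2) * (X - a) ^ 2))).
  { replace (- (hf f0 f1 f2 b1 I / (I * (b1 - b2) * (X - a) ^ 2)))
      with (hf f0 f1 f2 b1 I / (b2 - b1) / (I * (X - a) ^ 2)) by (field; lra).
    apply Rdiv_le_0_compat; [lra | nra]. }
  assert (T3 : 0 < ((X - b) * (b1 - lam f0) + (a - X) * (lam f0 - b2))
                   / ((X - a) ^ 2 * (X - b) ^ 2)).
  { apply Rdiv_lt_0_compat; [| nra].
    destruct (Rlt_or_le (lam f0) b1).
    - assert (0 < (X - b) * (b1 - lam f0)) by (apply Rmult_lt_0_compat; lra).
      assert (0 <= (a - X) * (lam f0 - b2)) by (apply Rmult_le_pos; lra); lra.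
    - assert (0 < (a - X) * (lam f0 - b2)) by (apply Rmult_lt_0_compat; lra).
      assert (0 <= (X - b) * (b1 - lam f0)) by (apply Rmult_le_pos; lra); lra. }
  unfold lyap_D_dX; fold a b; lra.
Qed.

Lemma lyap_D_sign X I : crossing_level I -> in_slice X I -> X <> 1 -> 0 < (X - 1) * lyap_D X I.
Proof.
  intros HI HX HX1.
  assert (Hincr : forall Y Z, in_slice Y I -> Y < Z -> in_slice Z I -> lyap_D Y I < lyap_D Z I).
  { intros Y Z HY HYZ HZ.
    apply (incr_function (fun X => lyap_D X I) (b2 * (1 - I)) (b1 * (1 - I)) (fun X => lyap_D_dX X I));
      simpl; try apply HY; try apply HZ; exact HYZ || intros W HW1 HW2.
    - apply lyap_D_derive; [exact HI | split; assumption].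
    - apply Rlt_gt, lyap_D_dX_pos; [apply HI | split; assumption]. }
  destruct HI as [HI H1].
  destruct (Rlt_dec X 1).
  - specialize (Hincr X 1 HX r H1); rewrite lyap_D_at1 in Hincr; nra.
  - assert (Hlt : 1 < X) by lra.
    specialize (Hincr 1 X H1 Hlt HX); rewrite lyap_D_at1 in Hincr; nra.
Qed.

Lemma lyap_drift_continuous I : crossing_level I -> continuous lyap_drift I.
Proof.
  intros [HI H1]; unfold in_slice in H1.
  assert (Hf : continuous (fun I => f0 I + f1 I + f2 I) I).
  { apply (continuous_plus (fun I => f0 I + f1 I) f2); [apply (continuous_plus f0 f1) |];
      [apply f0_cont | apply f1_cont | apply f2_cont]; lra. }
  assert (HB : continuous (fun I => lyap_B 1 I) I).
  { apply (ex_derive_continuous (fun I => lyap_B 1 I)); unfold lyap_B; auto_derive.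
    repeat apply Rmult_integral_contrapositive_currified; lra. }
  apply (continuous_ext (fun I => lyap_B 1 I * (f0 I + f1 I + f2 I))).
  - intros J; unfold lyap_drift, fXI; simpl; ring.
  - apply (continuous_mult (fun I => lyap_B 1 I) (fun I => f0 I + f1 I + f2 I)); assumption.
Qed.

Lemma lyap_drift_integral_derive c I : crossing_level c -> crossing_level I ->
  is_derive (fun I => RInt lyap_drift c I) I (lyap_drift I).
Proof.
  intros Hc HI.
  apply (is_derive_RInt lyap_drift _ c); [| apply lyap_drift_continuous, HI].
  apply (filter_imp crossing_level); [| apply crossing_level_open, HI].
  intros y Hy.
  apply (RInt_correct (V := R_CompleteNormedModule)), ex_RInt_continuous.
  intros z Hz; apply lyap_drift_continuous.
  destruct (Rle_dec c y).
  - rewrite Rmin_left, Rmax_right in Hz by lra; apply (crossing_level_convex c y); auto.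
  - rewrite Rmin_right, Rmax_left in Hz by lra; apply (crossing_level_convex y c); auto.
Qed.

Lemma lyap_derive_along (x i : R -> R) c t dx di :
  is_derive x t dx -> is_derive i t di -> crossing_level c -> crossing_level (i t) ->
  in_slice (x t) (i t) ->
  is_derive (fun t => lyap c (x t) (i t)) t
    ((x t - 1) * i t * lyap_B (x t) (i t) * dx + (log_part_dI (x t) (i t) - lyap_drift (i t)) * di).
Proof.
  intros Hx Hi Hc HI HX.
  assert (HM := is_derive_comp _ _ t _ _ (lyap_drift_integral_derive c (i t) Hc HI) Hi).
  assert (HV := is_derive_minus _ _ t _ _ (log_part_derive_along x i t dx di Hx Hi HI HX) HM).
  unfold lyap; simpl in HV.
  replace ((x t - 1) * i t * lyap_B (x t) (i t) * dx + (log_part_dI (x t) (i t) - lyap_drift (i t)) * di)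
    with (minus ((x t - 1) * i t * lyap_B (x t) (i t) * dx + log_part_dI (x t) (i t) * di)
                (scal di (lyap_drift (i t)))); [exact HV |].
  unfold minus, plus, opp, scal; simpl; unfold mult; simpl; ring.
Qed.

Section Orbit.

Variables x i : R -> R.
Hypothesis sol : is_solution f0 f1 f2 x i.
Hypothesis inside : forall t, in_int_T b1 b2 (x t, i t).

Lemma level_continuous t : continuity_pt i t.
Proof.
  apply continuity_pt_filterlim, (ex_derive_continuous i).
  eexists; apply (proj2 (sol t)).
Qed.

Lemma crossing_level_at_extremum tm :
  ((forall t, i t <= i tm) \/ (forall t, i tm <= i t)) -> crossing_level (i tm).
Proof.
  intros Hext.
  destruct (in_int_T_slice _ (inside tm)) as [HI HX]; simpl in HI, HX.
  assert (Hdi := derive_zero_at_extremum i tm _ Hext (proj2 (sol tm))).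
  assert (Hx1 : x tm = 1) by (destruct (Rmult_integral _ _ Hdi); lra).
  split; [exact HI | rewrite <- Hx1; exact HX].
Qed.

Lemma crossing_level_periodic T :
  0 < T -> (forall t, i (t + T) = i t) -> forall t, crossing_level (i t).
Proof.
  intros HT Hper t.
  destruct (periodic_attains_max i T HT Hper level_continuous) as [tM HM].
  destruct (periodic_attains_max (fun t => - i t) T HT) as [tm Hm].
  - intros s; rewrite Hper; reflexivity.
  - intros s; apply (continuity_pt_opp i), level_continuous.
  - apply (crossing_level_convex (i tm) (i tM)).
    + apply crossing_level_at_extremum; right; intros s; specialize (Hm s); lra.
    + apply crossing_level_at_extremum; left; exact HM.
    + split; [specialize (Hm t); lra | apply HM].
Qed.

Lemma crossing_level_connecting (lm lp : R) :
  is_lim i m_infty lm -> is_lim i p_infty lp -> crossing_level lm -> crossing_level lp ->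
  forall t, crossing_level (i t).
Proof.
  intros Hm Hp Hlm Hlp t.
  destruct (below_limit_or_max i lm lp crossing_level level_continuous Hm Hp Hlm Hlp)
    with t as [w [Hw Hiw]].
  { intros tM HM; apply crossing_level_at_extremum; left; exact HM. }
  destruct (below_limit_or_max (fun t => - i t) (- lm) (- lp) (fun u => crossing_level (- u)))
    with t as [u [Hu Hiu]].
  - intros s; apply (continuity_pt_opp i), level_continuous.
  - apply (is_lim_opp i m_infty lm Hm).
  - apply (is_lim_opp i p_infty lp Hp).
  - rewrite Ropp_involutive; exact Hlm.
  - rewrite Ropp_involutive; exact Hlp.
  - intros tm Hmin; rewrite Ropp_involutive.
    apply crossing_level_at_extremum; right; intros s; specialize (Hmin s); lra.
  - apply (crossing_level_convex (- u) w); auto; lra.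
Qed.

Variable c : R.
Hypothesis c_level : crossing_level c.
Hypothesis levels : forall t, crossing_level (i t).

Lemma lyap_derive_solution t :
  is_derive (fun t => lyap c (x t) (i t)) t ((x t - 1) * i t * lyap_D (x t) (i t)).
Proof.
  destruct (sol t) as [Hx Hi].
  destruct (in_int_T_slice _ (inside t)) as [_ HX].
  replace ((x t - 1) * i t * lyap_D (x t) (i t))
    with ((x t - 1) * i t * lyap_B (x t) (i t) * fXI f0 f1 f2 (x t) (i t)
          + (log_part_dI (x t) (i t) - lyap_drift (i t)) * ((x t - 1) * i t))
    by (unfold lyap_D; ring).
  apply lyap_derive_along; auto.
Qed.

Lemma lyap_derive_solution_pos t : x t <> 1 -> 0 < (x t - 1) * i t * lyap_D (x t) (i t).
Proof.
  intros Hx1.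
  destruct (in_int_T_slice _ (inside t)) as [HI HX]; simpl in HI, HX.
  assert (Hsign := lyap_D_sign (x t) (i t) (levels t) HX Hx1).
  replace ((x t - 1) * i t * lyap_D (x t) (i t)) with (i t * ((x t - 1) * lyap_D (x t) (i t)))
    by ring.
  apply Rmult_lt_0_compat; lra.
Qed.

Lemma lyap_nondecreasing s t : s <= t -> lyap c (x s) (i s) <= lyap c (x t) (i t).
Proof.
  apply (nondecreasing_of_derive_nonneg (fun t => lyap c (x t) (i t))
           (fun t => (x t - 1) * i t * lyap_D (x t) (i t))); [apply lyap_derive_solution |].
  intros u; destruct (Req_dec (x u) 1) as [Hx1 | Hx1].
  - rewrite Hx1; lra.
  - apply Rlt_le, lyap_derive_solution_pos, Hx1.
Qed.

Lemma lyap_constant_stationary :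
  (forall t, lyap c (x t) (i t) = lyap c (x 0) (i 0)) -> forall t, x t = 1 /\ i t = i 0.
Proof.
  intros Hconst.
  assert (Hx1 : forall t, x t = 1).
  { intros t; destruct (Req_dec (x t) 1) as [| Hx1]; [assumption | exfalso].
    assert (H0 := derive_zero_of_constant _ t _ Hconst (lyap_derive_solution t)).
    assert (Hpos := lyap_derive_solution_pos t Hx1); lra. }
  assert (Hi0 : forall t, is_derive i t 0).
  { intros t; destruct (sol t) as [_ Hi]; rewrite (Hx1 t), Rminus_diag, Rmult_0_l in Hi; exact Hi. }
  intros t; split; [apply Hx1 | apply constant_of_derive_zero, Hi0].
Qed.

End Orbit.

Lemma is_lim_lyap (x i : R -> R) c (F : Rbar) (l1 l2 : R) :
  crossing_level c -> crossing_level l2 -> in_slice l1 l2 ->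
  is_lim x F l1 -> is_lim i F l2 -> is_lim (fun t => lyap c (x t) (i t)) F (lyap c l1 l2).
Proof.
  intros Hc Hl2 HX Hx Hi; pose proof Hl2 as [HI H1]; unfold in_slice in H1, HX.
  assert (Hcomp : forall g : R -> R, (forall I, ex_derive g I) -> is_lim (fun t => g (i t)) F (g l2)).
  { intros g Hg; apply (is_lim_comp_continuous i g); [exact Hi | apply (ex_derive_continuous g), Hg]. }
  assert (Hmul : forall u v (lu lv : R), is_lim u F lu -> is_lim v F lv ->
                 is_lim (fun t => u t * v t) F (lu * lv)).
  { intros u v lu lv Hu Hv; apply (is_lim_mult u v F lu lv); easy. }
  assert (Hln : forall u (l : R), is_lim u F l -> 0 < l -> is_lim (fun t => ln (u t)) F (ln l)).
  { intros u l Hu Hl; apply (is_lim_comp_continuous u ln); [exact Hu | apply continuous_ln; lra]. }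
  assert (Hw : is_lim (fun t => weight (i t)) F (weight l2)).
  { apply (is_lim_comp_continuous i weight); [exact Hi |].
    apply (ex_derive_continuous weight); unfold weight; auto_derive; lra. }
  assert (Hint : is_lim (fun t => RInt lyap_drift c (i t)) F (RInt lyap_drift c l2)).
  { apply (is_lim_comp_continuous i (RInt lyap_drift c)); [exact Hi |].
    apply (ex_derive_continuous (RInt lyap_drift c)); eexists; apply lyap_drift_integral_derive; auto. }
  assert (Hlo : is_lim (fun t => b1 * (1 - i t) - x t) F (b1 * (1 - l2) - l1)).
  { apply (is_lim_minus' (fun t => b1 * (1 - i t))); [apply (Hcomp (fun I => b1 * (1 - I))) | exact Hx].
    intros; auto_derive; auto. }
  assert (Hhi : is_lim (fun t => x t - b2 * (1 - i t)) F (l1 - b2 * (1 - l2))).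
  { apply (is_lim_minus' x (fun t => b2 * (1 - i t))); [exact Hx | apply (Hcomp (fun I => b2 * (1 - I)))].
    intros; auto_derive; auto. }
  assert (Hlo1 : is_lim (fun t => b1 * (1 - i t) - 1) F (b1 * (1 - l2) - 1)).
  { apply (Hcomp (fun I => b1 * (1 - I) - 1)); intros; auto_derive; auto. }
  assert (Hhi1 : is_lim (fun t => 1 - b2 * (1 - i t)) F (1 - b2 * (1 - l2))).
  { apply (Hcomp (fun I => 1 - b2 * (1 - I))); intros; auto_derive; auto. }
  unfold lyap, log_part.
  apply is_lim_minus'; [apply is_lim_plus'; apply Hmul | exact Hint].
  - exact Hw.
  - apply is_lim_minus'; apply Hln; auto; lra.
  - apply (is_lim_minus' (fun _ => 1)); [apply is_lim_const | exact Hw].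
  - apply is_lim_minus'; apply Hln; auto; lra.
Qed.

Lemma interior_equilibrium P :
  is_equilibrium f0 f1 f2 P -> in_int_T b1 b2 P -> fst P = 1 /\ crossing_level (snd P).
Proof.
  intros [_ He] HP; destruct (in_int_T_slice P HP) as [HI HX].
  assert (HP1 : fst P = 1) by (destruct (Rmult_integral _ _ He); lra).
  split; [exact HP1 | split; [exact HI | rewrite <- HP1; exact HX]].
Qed.

Lemma lyap_connecting (x i : R -> R) c P Q :
  crossing_level c -> is_solution f0 f1 f2 x i -> (forall t, in_int_T b1 b2 (x t, i t)) ->
  is_equilibrium f0 f1 f2 P -> in_int_T b1 b2 P ->
  is_equilibrium f0 f1 f2 Q -> in_int_T b1 b2 Q -> connects x i P Q ->
  lyap c (fst P) (snd P) <= lyap c (fst Q) (snd Q) /\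
  (lyap c (fst P) (snd P) = lyap c (fst Q) (snd Q) -> forall t, (x t, i t) = P).
Proof.
  intros Hc Hsol Hin HeP HP HeQ HQ [Hxm [Him [Hxp Hip]]].
  destruct (interior_equilibrium P HeP HP) as [P1 JP].
  destruct (interior_equilibrium Q HeQ HQ) as [Q1 JQ].
  assert (Hlev := crossing_level_connecting x i Hsol Hin _ _ Him Hip JP JQ).
  assert (Hmono := lyap_nondecreasing x i Hsol Hin c Hc Hlev).
  assert (Lm : is_lim (fun t => lyap c (x t) (i t)) m_infty (lyap c (fst P) (snd P))).
  { apply is_lim_lyap; auto; rewrite P1; apply JP. }
  assert (Lp : is_lim (fun t => lyap c (x t) (i t)) p_infty (lyap c (fst Q) (snd Q))).
  { apply is_lim_lyap; auto; rewrite Q1; apply JQ. }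
  assert (Hbetween := nondecreasing_between_limits _ _ _ Hmono Lm Lp).
  split; [destruct (Hbetween 0); lra |].
  intros Heq.
  assert (Hstat : forall t, x t = 1 /\ i t = i 0).
  { apply (lyap_constant_stationary x i Hsol Hin c Hc Hlev).
    intros t; destruct (Hbetween t), (Hbetween 0); lra. }
  assert (Hi0 : i 0 = snd P).
  { assert (Hconst : is_lim (fun _ => i 0) m_infty (snd P)).
    { apply (is_lim_ext i); [intros t; apply Hstat | exact Him]. }
    apply is_lim_unique in Hconst; rewrite Lim_const in Hconst; injection Hconst; auto. }
  intros t; destruct P as [p1 p2]; simpl in *.
  destruct (Hstat t) as [-> ->]; rewrite Hi0, P1; reflexivity.
Qed.

Lemma no_periodic_solution : ~ periodic_solution_in f0 f1 f2 (in_int_T b1 b2).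
Proof.
  intros [x [i [T [Hsol [HT [Hper [[t0 Ht0] Hin]]]]]]].
  assert (Hlev := crossing_level_periodic x i Hsol Hin T HT (fun t => proj2 (Hper t))).
  assert (Hmono := lyap_nondecreasing x i Hsol Hin (i 0) (Hlev 0) Hlev).
  assert (Hconst : forall t, lyap (i 0) (x t) (i t) = lyap (i 0) (x 0) (i 0)).
  { apply (nondecreasing_periodic_constant (fun t => lyap (i 0) (x t) (i t)) T HT);
      [intros t; destruct (Hper t) as [-> ->]; reflexivity | exact Hmono]. }
  assert (Hstat := lyap_constant_stationary x i Hsol Hin (i 0) (Hlev 0) Hlev Hconst).
  apply Ht0; destruct (Hstat t0) as [-> ->], (Hstat 0) as [-> _]; reflexivity.
Qed.

Lemma no_homoclinic_loop : ~ homoclinic_loop_in f0 f1 f2 (in_int_T b1 b2).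
Proof.
  intros [P [x [i [HeP [Hsol [Hcon [[t Ht] [HP Hin]]]]]]]].
  destruct (interior_equilibrium P HeP HP) as [_ JP].
  apply Ht, (lyap_connecting x i (snd P) P P JP Hsol Hin HeP HP HeP HP Hcon); reflexivity.
Qed.

Lemma no_oriented_phase_polygon : ~ oriented_phase_polygon_in f0 f1 f2 (in_int_T b1 b2).
Proof.
  intros [n [p [xs [is_ [Hn [Hpn [_ Hedges]]]]]]].
  assert (Hvertex : forall k, (k <= n)%nat ->
                     is_equilibrium f0 f1 f2 (p k) /\ in_int_T b1 b2 (p k)).
  { intros k Hk.
    assert (Hj : exists j, (j < n)%nat /\ p k = p j).
    { destruct (Nat.eq_dec k n) as [-> | Hkn]; [exists 0%nat | exists k]; split; auto; lia. }
    destruct Hj as [j [Hj ->]]; destruct (Hedges j Hj) as [He [HP _]]; auto. }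
  destruct (Hvertex 0%nat) as [He0 HP0]; [lia |].
  destruct (interior_equilibrium _ He0 HP0) as [_ Hc].
  set (V := fun q : R * R => lyap (snd (p 0%nat)) (fst q) (snd q)).
  assert (Hedge : forall k, (k < n)%nat ->
    V (p k) <= V (p (S k)) /\ (V (p k) = V (p (S k)) -> forall t, (xs k t, is_ k t) = p k)).
  { intros k Hk; destruct (Hedges k Hk) as [_ [_ [Hsol [Hcon [_ Hin]]]]].
    destruct (Hvertex k) as [HeP HP]; [lia |]; destruct (Hvertex (S k)) as [HeQ HQ]; [lia |].
    exact (lyap_connecting (xs k) (is_ k) _ _ _ Hc Hsol Hin HeP HP HeQ HQ Hcon). }
  assert (Heq : V (p 0%nat) = V (p 1%nat)).
  { apply (cyclic_chain_eq (fun k => V (p k)) n Hn); [intros k Hk; apply Hedge, Hk | simpl; rewrite Hpn; reflexivity]. }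
  destruct (Hedges 0%nat) as [_ [_ [_ [_ [[t Ht] _]]]]]; [lia |].
  apply Ht, (proj2 (Hedge 0%nat ltac:(lia))), Heq.
Qed.

End Flow.

End Lyapunov.

Theorem theorem4p9 (f0 f1 f2 : R -> R) (b1 b2 : R) :
  smooth_on_nonneg f0 -> smooth_on_nonneg f1 -> smooth_on_nonneg f2 ->
  f_compatible f0 f1 f2 b1 b2 ->
  ~ periodic_solution_in f0 f1 f2 (in_int_T b1 b2) /\
  ~ homoclinic_loop_in f0 f1 f2 (in_int_T b1 b2) /\
  ~ oriented_phase_polygon_in f0 f1 f2 (in_int_T b1 b2).
Proof.
  intros H0 H1 H2 [Hb [Hlam Hh]].
  assert (Hc0 := fun I => continuous_of_smooth_on_nonneg f0 I H0).
  assert (Hc1 := fun I => continuous_of_smooth_on_nonneg f1 I H1).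
  assert (Hc2 := fun I => continuous_of_smooth_on_nonneg f2 I H2).
  split; [| split].
  - exact (no_periodic_solution b1 b2 Hb f0 f1 f2 Hlam Hh Hc0 Hc1 Hc2).
  - exact (no_homoclinic_loop b1 b2 Hb f0 f1 f2 Hlam Hh Hc0 Hc1 Hc2).
  - exact (no_oriented_phase_polygon b1 b2 Hb f0 f1 f2 Hlam Hh Hc0 Hc1 Hc2).
Qed.
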